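(* Let $\bm X=X_1\times\cdots\times X_n\in\mathbb{IR}^n$ with $\operatorname{wid}(X_i)>0$ for at least one $i$. Let $Z\subseteq\mathbb{R}$ be convex with $\sum_{i=1}^n x_i\in Z$ for all $\bm x\in\bm X$, and let $\varphi:Z\to\mathbb{R}$ be convex. Define $\mathcal P=\{j:\operatorname{wid}(X_j)>0\}$, $\theta_i=\operatorname{wid}(X_i)/\sum_{j\in\mathcal P}\operatorname{wid}(X_j)$ for $i\in\mathcal P$, $\underline\sigma=\sum_{i=1}^n\underline X_i$, $\overline\sigma=\sum_{i=1}^n\overline X_i$. Then for all $\bm x\in\bm X$, $$\varphi\Big(\sum_{i=1}^n x_i\Big)\ge\sum_{i=1}^n\varphi(x_i-\underline X_i+\underline\sigma)-(n-1)\varphi(\underline\sigma)=\sum_{i\in\mathcal P}\Big(\varphi(x_i-\underline X_i+\underline\sigma)-(1-\theta_i)\varphi(\underline\sigma)\Big),$$ $$\varphi\Big(\sum_{i=1}^n x_i\Big)\ge\sum_{i=1}^n\varphi(x_i-\overline X_i+\overline\sigma)-(n-1)\varphi(\overline\sigma)=\sum_{i\in\mathcal P}\Big(\varphi(x_i-\overline X_i+\overline\sigma)-(1-\theta_i)\varphi(\overline\sigma)\Big).$$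
   Context: $\mathbb{IR}^n$ is the set of boxes $\bm X=X_1\times\cdots\times X_n$ with $X_i=[\underline X_i,\overline X_i]$ compact real intervals; $\operatorname{wid}(X_i)=\overline X_i-\underline X_i$. *)

From mathcomp Require Import all_boot all_order all_algebra.
From mathcomp Require Import reals.
Set Implicit Arguments. Unset Strict Implicit. Unset Printing Implicit Defensive.
Import Order.TTheory GRing.Theory Num.Theory.
Local Open Scope ring_scope.

Definition convex_subset (R : realType) (Z : R -> Prop) : Prop :=
  forall a b t : R, Z a -> Z b -> 0 <= t -> t <= 1 -> Z (t * a + (1 - t) * b).

Definition convex_on (R : realType) (Z : R -> Prop) (phi : R -> R) : Prop :=
  forall a b t : R, Z a -> Z b -> 0 <= t -> t <= 1 ->
    phi (t * a + (1 - t) * b) <= t * phi a + (1 - t) * phi b.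

Definition in_box (R : realType) (n : nat) (lo hi : 'I_n -> R) (x : 'I_n -> R) : Prop :=
  forall i, lo i <= x i <= hi i.

From mathcomp Require Import all_boot all_order all_algebra.
From mathcomp Require Import reals ring lra.
Import Order.TTheory GRing.Theory Num.Theory.
Local Open Scope ring_scope.

(* Write [x i = a i + d i] with [a] a corner of the box, so that all [d i] have
   the same sign and [s := \sum a] lies in [Z]. Each [s + d i] is the convex
   combination of [s + \sum d] and [s] with weight [d i / \sum d] in [0, 1];
   summing the convexity inequalities, whose weights add up to 1, gives
   [\sum phi (s + d i) <= phi (s + \sum d) + (n - 1) phi s]. The second form
   of each bound only regroups terms: for [i] outside [P] the corner term is
   [phi s], and the weights [theta i] sum to 1 over [P]. *)

Section SameSign.

Variables (R : realType) (I : finType).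

Definition same_sign (d : I -> R) := (forall i, 0 <= d i) \/ (forall i, d i <= 0).

Lemma ge0_div_sum_itv (d : I -> R) i :
  (forall j, 0 <= d j) -> 0 <= d i / \sum_j d j <= 1.
Proof.
move=> d_ge0; have [->|D0] := eqVneq (\sum_j d j) 0.
  by rewrite invr0 mulr0 lexx ler01.
have D_gt0 : 0 < \sum_j d j by rewrite lt_def D0 sumr_ge0.
rewrite divr_ge0 ?sumr_ge0 //= ler_pdivrMr // mul1r.
by rewrite (bigD1 i) //= lerDl sumr_ge0.
Qed.

Lemma same_sign_div_sum_itv (d : I -> R) i :
  same_sign d -> 0 <= d i / \sum_j d j <= 1.
Proof.
case=> hd; first exact: ge0_div_sum_itv.
rewrite -mulrNN -invrN -sumrN; apply: ge0_div_sum_itv => j.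
by rewrite oppr_ge0.
Qed.

Lemma same_sign_sum_eq0 (d : I -> R) i :
  same_sign d -> \sum_j d j = 0 -> d i = 0.
Proof.
have ge0_eq0 (e : I -> R) : (forall j, 0 <= e j) -> \sum_j e j = 0 -> e i = 0.
  by move=> e_ge0 /eqP; rewrite psumr_eq0 // => /allP/(_ i (mem_index_enum _))/eqP.
case=> hd D0; first exact: ge0_eq0.
apply/eqP; rewrite -oppr_eq0; apply/eqP.
apply: (ge0_eq0 (fun j => - d j)) => [j|]; first by rewrite oppr_ge0.
by rewrite sumrN D0 oppr0.
Qed.

End SameSign.

Arguments same_sign {R I} d.
Arguments same_sign_div_sum_itv {R I d} i.
Arguments same_sign_sum_eq0 {R I d} i.

Section ConvexSum.

Variables (R : realType) (Z : R -> Prop) (phi : R -> R).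
Hypothesis phi_convex : convex_on Z phi.

Lemma convex_on_shift s D t : Z s -> Z (s + D) -> 0 <= t <= 1 ->
  phi (s + t * D) <= t * phi (s + D) + (1 - t) * phi s.
Proof.
move=> Zs ZsD /andP[t_ge0 t_le1].
have -> : s + t * D = t * (s + D) + (1 - t) * s by ring.
exact: phi_convex.
Qed.

Lemma sum_convex_same_sign {I : finType} {s} {d : I -> R} :
  same_sign d -> Z s -> Z (s + \sum_i d i) ->
  \sum_i phi (s + d i) <= phi (s + \sum_i d i) + (#|I|%:R - 1) * phi s.
Proof.
move=> hd Zs ZsD; set D := \sum_i d i.
have [D0|D0] := eqVneq D 0.
  rewrite D0 addr0 (eq_bigr (fun=> phi s)) => [|i _]; last first.
    by rewrite (same_sign_sum_eq0 i hd D0) addr0.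
  by rewrite sumr_const -mulr_natl; lra.
have weights_sum : \sum_i d i / D = 1 by rewrite -mulr_suml divff.
have convex_i i : phi (s + d i) <= d i / D * phi (s + D) + (1 - d i / D) * phi s.
  by rewrite -[in s + d i](divfK D0 (d i)) convex_on_shift ?same_sign_div_sum_itv.
apply: le_trans (ler_sum _ (fun i _ => convex_i i)) _.
by rewrite big_split /= -!mulr_suml sumrB weights_sum divff // mul1r sumr_const.
Qed.

Lemma convex_corner_bound (I : finType) (a x : I -> R) :
  same_sign (fun i => x i - a i) -> Z (\sum_i a i) -> Z (\sum_i x i) ->
  \sum_i phi (x i - a i + \sum_j a j) - (#|I|%:R - 1) * phi (\sum_j a j)
    <= phi (\sum_i x i).
Proof.
move=> hd Za Zx; rewrite lerBlDr.
have := sum_convex_same_sign hd Za; rewrite sumrB addrC subrK => /(_ Zx).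
by under eq_bigr do rewrite addrC.
Qed.

End ConvexSum.

Arguments convex_corner_bound {R Z phi} phi_convex {I a x}.

Lemma sum_sub_regroup (R : realType) (I : finType) (P : pred I) (f w : I -> R) c :
  (forall i, ~~ P i -> f i = c) -> \sum_(j | P j) w j != 0 ->
  \sum_i f i - (#|I|%:R - 1) * c
    = \sum_(i | P i) (f i - (1 - w i / \sum_(j | P j) w j) * c).
Proof.
move=> f_notP W0; set W := \sum_(j | P j) w j.
have weights : \sum_(i | P i) (1 - w i / W) * c = #|P|%:R * c - c.
  by rewrite -mulr_suml sumrB -mulr_suml divff // sumr_const mulrBl mul1r.
rewrite sumrB weights (bigID P) /= (eq_bigr _ f_notP) sumr_const.
have cardP : #|P| + #|(fun i => ~~ P i)| = #|I| := cardC P.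
rewrite -cardP natrD -mulr_natl; ring.
Qed.

Theorem proposition3 (R : realType) (n : nat) (lo hi : 'I_n -> R)
  (hlohi : forall i, lo i <= hi i)
  (hpos : exists i, 0 < hi i - lo i)
  (Z : R -> Prop) (hZ : convex_subset Z)
  (hsum : forall x : 'I_n -> R, in_box lo hi x -> Z (\sum_(i < n) x i))
  (phi : R -> R) (hphi : convex_on Z phi) :
  let P := fun j : 'I_n => 0 < hi j - lo j in
  let theta := fun i : 'I_n =>
    (hi i - lo i) / (\sum_(j < n | P j) (hi j - lo j)) in
  let slo := \sum_(i < n) lo i in
  let shi := \sum_(i < n) hi i in
  forall x : 'I_n -> R, in_box lo hi x ->
    (phi (\sum_(i < n) x i) >=
       \sum_(i < n) phi (x i - lo i + slo) - (n%:R - 1) * phi slo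
     /\ \sum_(i < n) phi (x i - lo i + slo) - (n%:R - 1) * phi slo
        = \sum_(i < n | P i) (phi (x i - lo i + slo) - (1 - theta i) * phi slo))
    /\
    (phi (\sum_(i < n) x i) >=
       \sum_(i < n) phi (x i - hi i + shi) - (n%:R - 1) * phi shi
     /\ \sum_(i < n) phi (x i - hi i + shi) - (n%:R - 1) * phi shi
        = \sum_(i < n | P i) (phi (x i - hi i + shi) - (1 - theta i) * phi shi)).
Proof.
move=> P theta slo shi x hx.
have Zlo : Z slo by apply: hsum => i; rewrite lexx hlohi.
have Zhi : Z shi by apply: hsum => i; rewrite lexx hlohi.
have Zx := hsum x hx.
have W0 : \sum_(j < n | P j) (hi j - lo j) != 0.
  case: hpos => i Pi; rewrite gt_eqF // (bigD1 i) //= ltr_pwDl //.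
  by rewrite sumr_ge0 // => j _; rewrite subr_ge0.
have flat i : ~~ P i -> lo i = x i /\ x i = hi i.
  by rewrite /P -leNgt => h; have := hx i; lra.
split; split; rewrite -[n in n%:R](card_ord n).
- apply: (convex_corner_bound hphi) => //.
  by left => i; rewrite subr_ge0; case/andP: (hx i).
- apply: sum_sub_regroup W0 => i /flat[<- _].
  by rewrite subrr add0r.
- apply: (convex_corner_bound hphi) => //.
  by right => i; rewrite subr_le0; case/andP: (hx i).
- apply: sum_sub_regroup W0 => i /flat[_ ->].
  by rewrite subrr add0r.
Qed.
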